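(* Let $c_v>\frac12$ and let $\varrho_\pm,p_\pm>0$, $v_\pm\in\mathbb{R}$ be Riemann data for the one-dimensional full Euler system whose 1D Riemann solution consists of a 1-shock, possibly a 2-contact discontinuity, and a 3-shock, with intermediate states $(\varrho_{M-},v_M,p_M)$, $(\varrho_{M+},v_M,p_M)$, and assume $v_M=0$. Let $\varepsilon_{\max}>0$ and functions $\mu_0,\mu_1,\mu_2:(0,\varepsilon_{\max}]\to\mathbb{R}$ be as described in the context (so that $\mu_0(\varepsilon)<\mu_1(\varepsilon)<\mu_2(\varepsilon)$). For $(\varepsilon,\delta)\in(0,\varepsilon_{\max}]\times(0,p_M)$ define $C_1(\varepsilon,\delta)=\frac{2}{(\varrho_{M-}+\varepsilon)(\mu_0-\mu_1)}\Big[-\mu_0\big(c_v(p_M-\delta-p_-)-\tfrac12\varrho_-v_-^2\big)+\mu_1(c_v+1)(p_M-\delta)-\big(\tfrac12\varrho_-v_-^2+(c_v+1)p_-\big)v_-\Big]$, $C_2(\varepsilon,\delta)=\frac{2}{(\varrho_{M+}-\varepsilon)(\mu_2-\mu_1)}\Big[-\mu_2\big(c_v(p_M-\delta-p_+)-\tfrac12\varrho_+v_+^2\big)+\mu_1(c_v+1)(p_M-\delta)-\big(\tfrac12\varrho_+v_+^2+(c_v+1)p_+\big)v_+\Big]$, $\gamma_1(\varepsilon,\delta)=\frac{1}{\varrho_{M-}+\varepsilon}\Big[(\varrho_{M-}+\varepsilon)\frac{C_1}{2}-\varrho_-v_-^2+p_M-\delta-p_--\mu_0\big((\varrho_{M-}+\varepsilon)\mu_1-\varrho_-v_-\big)\Big]$,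 $\gamma_2(\varepsilon,\delta)=\frac{1}{\varrho_{M+}-\varepsilon}\Big[(\varrho_{M+}-\varepsilon)\frac{C_2}{2}-\varrho_+v_+^2+p_M-\delta-p_+-\mu_2\big((\varrho_{M+}-\varepsilon)\mu_1-\varrho_+v_+\big)\Big]$, where $\mu_i=\mu_i(\varepsilon)$ and $C_i=C_i(\varepsilon,\delta)$. Then $\lim_{(\varepsilon,\delta)\to0}C_1(\varepsilon,\delta)=\lim_{(\varepsilon,\delta)\to0}C_2(\varepsilon,\delta)=v_M^2$ and $\lim_{(\varepsilon,\delta)\to0}\gamma_1(\varepsilon,\delta)=\lim_{(\varepsilon,\delta)\to0}\gamma_2(\varepsilon,\delta)=-\frac{v_M^2}{2}$.
   Context: The one-dimensional full Euler system for an ideal gas is $\partial_t\varrho+\partial_2(\varrho v)=0$, $\partial_t(\varrho v)+\partial_2(\varrho v^2+p)=0$, $\partial_t(\frac12\varrho v^2+c_vp)+\partial_2[(\frac12\varrho v^2+(c_v+1)p)v]=0$; its 1D Riemann solution is the unique self-similar BV solution with the given data, consisting of a 1-wave, a possibly absent contact discontinuity and a 3-wave separated by constant states; here both outer waves are admissible shocks with speeds $\sigma_\pm$, and $\varrho_{M\pm}>\varrho_\pm$, $p_M>\max\{p_-,p_+\}$. Define $A(\varepsilon)=\varrho_-(\varrho_{M-}+\varepsilon)(\varrho_{M+}-\varepsilon-\varrho_+)-\varrho_+(\varrho_{M+}-\varepsilon)(\varrho_{M-}+\varepsilon-\varrho_-)$, $B(\varepsilon)=\varrho_-\varrho_+(\varrho_{M-}+\varepsilon)(\varrho_{M+}-\varepsilon)(v_--v_+)^2-(p_--p_+)A(\varepsilon)$,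 $D(\varepsilon)=v_-\varrho_-(\varrho_{M-}+\varepsilon)(\varrho_{M+}-\varepsilon-\varrho_+)-v_+\varrho_+(\varrho_{M+}-\varepsilon)(\varrho_{M-}+\varepsilon-\varrho_-)$. $\varepsilon_{\max}>0$ is such that on $(0,\varepsilon_{\max}]$: $A\neq0$, $B>0$, $\varrho_{M+}-\varepsilon-\varrho_+>0$, $\varrho_{M-}+\varepsilon-\varrho_->0$ and $\mu_0<\mu_1<\mu_2$, where $\mu_0=\frac1A\big[D+\varrho_-\varrho_+(\varrho_{M+}-\varepsilon)(v_--v_+)-\sqrt{(\varrho_{M-}+\varepsilon)^2\frac{\varrho_{M+}-\varepsilon-\varrho_+}{\varrho_{M-}+\varepsilon-\varrho_-}B}\big]$, $\mu_1=\frac1A\big[D-\sqrt{(\varrho_{M-}+\varepsilon-\varrho_-)(\varrho_{M+}-\varepsilon-\varrho_+)B}\big]$, $\mu_2=\frac1A\big[D+\varrho_-\varrho_+(\varrho_{M-}+\varepsilon)(v_--v_+)-\sqrt{(\varrho_{M+}-\varepsilon)^2\frac{\varrho_{M-}+\varepsilon-\varrho_-}{\varrho_{M+}-\varepsilon-\varrho_+}B}\big]$ (all evaluated at $\varepsilon$). The paper shows such $\varepsilon_{\max}$ exists. *)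

From Stdlib Require Import Reals Lra.
Open Scope R_scope.

(* Notation: left state (rho_-, v_-, p_-) = (rl, vl, pl),
   right state (rho_+, v_+, p_+) = (rr, vr, pr),
   intermediate states (rho_{M-}, v_M, p_M) = (rMl, vM, pM) and
   (rho_{M+}, v_M, p_M) = (rMr, vM, pM). *)

Definition energy (cv r v p : R) : R := / 2 * r * v ^ 2 + cv * p.
Definition energy_flux (cv r v p : R) : R := (/ 2 * r * v ^ 2 + (cv + 1) * p) * v.

Definition RH (cv s r1 v1 p1 r2 v2 p2 : R) : Prop :=
  s * (r2 - r1) = r2 * v2 - r1 * v1 /\
  s * (r2 * v2 - r1 * v1) = (r2 * v2 ^ 2 + p2) - (r1 * v1 ^ 2 + p1) /\
  s * (energy cv r2 v2 p2 - energy cv r1 v1 p1)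
    = energy_flux cv r2 v2 p2 - energy_flux cv r1 v1 p1.

(* The 1D Riemann solution with data (rl,vl,pl),(rr,vr,pr) consists of an
   admissible 1-shock (speed sm) from (rl,vl,pl) to (rMl,vM,pM), a (possibly
   absent, if rMl = rMr) contact discontinuity of speed vM, and an admissible
   3-shock (speed sp) from (rMr,vM,pM) to (rr,vr,pr); admissibility as in the
   context: rho_{M+-} > rho_+-, p_M > max(p_-,p_+). *)
Definition shock_contact_shock (cv rl vl pl rr vr pr rMl rMr vM pM : R) : Prop :=
  exists sm sp : R,
    sm < vM /\ vM < sp /\
    RH cv sm rl vl pl rMl vM pM /\
    RH cv sp rMr vM pM rr vr pr /\
    rMl > rl /\ rMr > rr /\ pM > Rmax pl pr.

Definition Aeps (rl rr rMl rMr e : R) : R :=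
  rl * (rMl + e) * (rMr - e - rr) - rr * (rMr - e) * (rMl + e - rl).

Definition Beps (rl vl pl rr vr pr rMl rMr e : R) : R :=
  rl * rr * (rMl + e) * (rMr - e) * (vl - vr) ^ 2 - (pl - pr) * Aeps rl rr rMl rMr e.

Definition Deps (rl vl rr vr rMl rMr e : R) : R :=
  vl * rl * (rMl + e) * (rMr - e - rr) - vr * rr * (rMr - e) * (rMl + e - rl).

Definition mu0 (rl vl pl rr vr pr rMl rMr e : R) : R :=
  / Aeps rl rr rMl rMr e *
  (Deps rl vl rr vr rMl rMr e + rl * rr * (rMr - e) * (vl - vr)
   - sqrt ((rMl + e) ^ 2 * ((rMr - e - rr) / (rMl + e - rl))
           * Beps rl vl pl rr vr pr rMl rMr e)).

Definition mu1 (rl vl pl rr vr pr rMl rMr e : R) : R :=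
  / Aeps rl rr rMl rMr e *
  (Deps rl vl rr vr rMl rMr e
   - sqrt ((rMl + e - rl) * (rMr - e - rr) * Beps rl vl pl rr vr pr rMl rMr e)).

Definition mu2 (rl vl pl rr vr pr rMl rMr e : R) : R :=
  / Aeps rl rr rMl rMr e *
  (Deps rl vl rr vr rMl rMr e + rl * rr * (rMl + e) * (vl - vr)
   - sqrt ((rMr - e) ^ 2 * ((rMl + e - rl) / (rMr - e - rr))
           * Beps rl vl pl rr vr pr rMl rMr e)).

Definition eps_max_ok (rl vl pl rr vr pr rMl rMr emax : R) : Prop :=
  0 < emax /\
  forall e, 0 < e <= emax ->
    Aeps rl rr rMl rMr e <> 0 /\
    Beps rl vl pl rr vr pr rMl rMr e > 0 /\
    rMr - e - rr > 0 /\ rMl + e - rl > 0 /\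
    mu0 rl vl pl rr vr pr rMl rMr e < mu1 rl vl pl rr vr pr rMl rMr e /\
    mu1 rl vl pl rr vr pr rMl rMr e < mu2 rl vl pl rr vr pr rMl rMr e.

Definition C_1 (cv rl vl pl rr vr pr rMl rMr pM e d : R) : R :=
  let m0 := mu0 rl vl pl rr vr pr rMl rMr e in
  let m1 := mu1 rl vl pl rr vr pr rMl rMr e in
  2 / ((rMl + e) * (m0 - m1)) *
  (- m0 * (cv * (pM - d - pl) - / 2 * rl * vl ^ 2)
   + m1 * (cv + 1) * (pM - d)
   - (/ 2 * rl * vl ^ 2 + (cv + 1) * pl) * vl).

Definition C_2 (cv rl vl pl rr vr pr rMl rMr pM e d : R) : R :=
  let m2 := mu2 rl vl pl rr vr pr rMl rMr e in
  let m1 := mu1 rl vl pl rr vr pr rMl rMr e in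
  2 / ((rMr - e) * (m2 - m1)) *
  (- m2 * (cv * (pM - d - pr) - / 2 * rr * vr ^ 2)
   + m1 * (cv + 1) * (pM - d)
   - (/ 2 * rr * vr ^ 2 + (cv + 1) * pr) * vr).

Definition gamma1 (cv rl vl pl rr vr pr rMl rMr pM e d : R) : R :=
  let m0 := mu0 rl vl pl rr vr pr rMl rMr e in
  let m1 := mu1 rl vl pl rr vr pr rMl rMr e in
  / (rMl + e) *
  ((rMl + e) * (C_1 cv rl vl pl rr vr pr rMl rMr pM e d / 2)
   - rl * vl ^ 2 + pM - d - pl - m0 * ((rMl + e) * m1 - rl * vl)).

Definition gamma2 (cv rl vl pl rr vr pr rMl rMr pM e d : R) : R :=
  let m2 := mu2 rl vl pl rr vr pr rMl rMr e in
  let m1 := mu1 rl vl pl rr vr pr rMl rMr e in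
  / (rMr - e) *
  ((rMr - e) * (C_2 cv rl vl pl rr vr pr rMl rMr pM e d / 2)
   - rr * vr ^ 2 + pM - d - pr - m2 * ((rMr - e) * m1 - rr * vr)).

Definition lim_at0 (emax pM : R) (f : R -> R -> R) (L : R) : Prop :=
  forall eta, 0 < eta -> exists r, 0 < r /\
    forall e d, 0 < e <= emax -> 0 < d < pM -> e < r -> d < r ->
      Rabs (f e d - L) < eta.

(* At e = 0 the roots mu0, mu1, mu2 are the wave speeds sigma_-, v_M = 0 and sigma_+: there each
   discriminant is a perfect square. Written in conjugate form c / (b + sqrt disc), the roots are
   smooth in e near 0 even where A vanishes, so they are continuous at e = 0. Since C_i and gamma_i
   are affine in delta with coefficients continuous in e, their limits are their values at
   (e, delta) = (0, 0), which vanish by the energy and the momentum Rankine-Hugoniot conditions of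
   the 1- and the 3-shock. The 3-shock is the 1-shock of the data mirrored by x -> -x. *)

From Stdlib Require Import Reals Lra.
From Coquelicot Require Import Coquelicot.
Open Scope R_scope.

Lemma ball0_R (r : posreal) (e : R) : ball 0 r e <-> Rabs e < r.
Proof.
  change (ball 0 r e) with (Rabs (e - 0) < r). rewrite Rminus_0_r. reflexivity.
Qed.

Lemma ex_derive_continuous_R (f : R -> R) (x : R) : ex_derive f x -> continuous f x.
Proof. exact (@ex_derive_continuous R_AbsRing R_NormedModule f x). Qed.

Lemma locally_pos (f : R -> R) (x : R) :
  continuous f x -> 0 < f x -> locally x (fun y => 0 < f y).
Proof. intros Hf Hpos. exact (Hf _ (open_gt 0 _ Hpos)). Qed.

Lemma locally0_opp (P : R -> Prop) :
  locally 0 P -> locally 0 (fun e => P (- e)).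
Proof.
  intros [r Hr]. exists r. intros e He. apply Hr, ball0_R.
  apply (proj1 (ball0_R r e)) in He. rewrite Rabs_Ropp. exact He.
Qed.

Lemma lim_at0_affine (emax pM L : R) (f : R -> R -> R) (g h : R -> R) :
  locally 0 (fun e => 0 < e <= emax -> forall d, 0 < d < pM -> f e d = g e + d * h e) ->
  continuous g 0 -> g 0 = L -> continuous h 0 -> lim_at0 emax pM f L.
Proof.
  intros Hf Hg HL Hh eta Heta. subst L.
  set (K := Rabs (h 0) + 1).
  assert (HK : 0 < K) by (unfold K; pose proof (Rabs_pos (h 0)); lra).
  assert (Hg_near : locally 0 (fun e => ball (g 0) (eta / 2) (g e))).
  { exact (proj1 (filterlim_locally g (g 0)) Hg (mkposreal (eta / 2) ltac:(lra))). }
  assert (Hh_near : locally 0 (fun e => ball (h 0) 1 (h e))).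
  { exact (proj1 (filterlim_locally h (h 0)) Hh (mkposreal 1 Rlt_0_1)). }
  destruct (filter_and _ _ Hf (filter_and _ _ Hg_near Hh_near)) as [r Hr].
  exists (Rmin r (eta / (2 * K))). split.
  { apply Rmin_pos; [apply cond_pos | apply Rdiv_lt_0_compat; lra]. }
  intros e d He Hd Her Hdr.
  destruct (Hr e) as (Heq & Hge & Hhe).
  { apply ball0_R. rewrite Rabs_pos_eq by lra. eapply Rlt_le_trans; [exact Her | apply Rmin_l]. }
  change (Rabs (g e - g 0) < eta / 2) in Hge.
  change (Rabs (h e - h 0) < 1) in Hhe.
  assert (HdK : d * K <= eta / 2).
  { apply Rle_trans with (eta / (2 * K) * K).
    - apply Rmult_le_compat_r; [lra|]. left. eapply Rlt_le_trans; [exact Hdr | apply Rmin_r].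
    - right. field. lra. }
  assert (Rabs (h e) <= K) by (unfold K; pose proof (Rabs_triang_inv (h e) (h 0)); lra).
  assert (d * Rabs (h e) <= d * K) by (apply Rmult_le_compat_l; lra).
  rewrite Heq by auto.
  replace (g e + d * h e - g 0) with ((g e - g 0) + d * h e) by ring.
  eapply Rle_lt_trans; [apply Rabs_triang|].
  rewrite Rabs_mult, (Rabs_pos_eq d) by lra.
  lra.
Qed.

Lemma RH_sym cv s r1 v1 p1 r2 v2 p2 :
  RH cv s r1 v1 p1 r2 v2 p2 -> RH cv s r2 v2 p2 r1 v1 p1.
Proof. unfold RH. intros (Hm & Hp & He). repeat split; lra. Qed.

Lemma RH_reflect cv s r1 v1 p1 r2 v2 p2 :
  RH cv s r1 v1 p1 r2 v2 p2 -> RH cv (- s) r1 (- v1) p1 r2 (- v2) p2.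
Proof. unfold RH, energy, energy_flux. intros (Hm & Hp & He). repeat split; lra. Qed.

Lemma RH_rest_solve cv s r v p rM pM : 0 < r -> RH cv s r v p rM 0 pM ->
  v = - s * (rM - r) / r /\ p = pM - r * v ^ 2 + s * r * v.
Proof.
  intros Hr (Hm & Hp & _). assert (Hv : r * v = - s * (rM - r)) by lra. split.
  - rewrite <- Hv. field. lra.
  - lra.
Qed.

(* C_1, gamma1 (resp. C_2, gamma2) unfold to these with (r, v, p) the left (resp. right) state,
   rho = rMl + e (resp. rMr - e), mu = mu0 (resp. mu2) and m = mu1. *)
Definition shock_C cv r v p pM rho mu m d :=
  2 / (rho * (mu - m)) *
  (- mu * (cv * (pM - d - p) - / 2 * r * v ^ 2) + m * (cv + 1) * (pM - d)
   - (/ 2 * r * v ^ 2 + (cv + 1) * p) * v).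

Definition shock_gamma cv r v p pM rho mu m d :=
  / rho * (rho * (shock_C cv r v p pM rho mu m d / 2)
   - r * v ^ 2 + pM - d - p - mu * (rho * m - r * v)).

Lemma shock_C_at0 cv s r v p rM pM rho :
  RH cv s r v p rM 0 pM -> shock_C cv r v p pM rho s 0 0 = 0.
Proof.
  unfold RH, energy, energy_flux, shock_C. intros (_ & _ & Hen).
  apply Rmult_eq_0_compat_l. lra.
Qed.

Lemma shock_gamma_at0 cv s r v p rM pM rho :
  RH cv s r v p rM 0 pM -> shock_gamma cv r v p pM rho s 0 0 = 0.
Proof.
  intros Hsh. unfold shock_gamma. rewrite (shock_C_at0 cv s r v p rM pM rho Hsh).
  destruct Hsh as (_ & Hmom & _). apply Rmult_eq_0_compat_l. lra.
Qed.

Lemma lim_at0_shock cv s r v p rM pM emax (rho M m mu mu1 : R -> R) :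
  RH cv s r v p rM 0 pM -> s <> 0 ->
  ex_derive rho 0 -> rho 0 <> 0 -> ex_derive M 0 -> M 0 = s -> ex_derive m 0 -> m 0 = 0 ->
  locally 0 (fun e => 0 < e <= emax -> mu e = M e /\ mu1 e = m e) ->
  lim_at0 emax pM (fun e d => shock_C cv r v p pM (rho e) (mu e) (mu1 e) d) 0 /\
  lim_at0 emax pM (fun e d => shock_gamma cv r v p pM (rho e) (mu e) (mu1 e) d) 0.
Proof.
  intros Hsh Hs Drho Hrho DM HM Dm Hm Hnear.
  assert (rho 0 * (M 0 - m 0) <> 0).
  { rewrite HM, Hm, Rminus_0_r. now apply Rmult_integral_contrapositive. }
  set (slope e := 2 * (M e * cv - m e * (cv + 1)) / (rho e * (M e - m e))).
  split.
  - apply (lim_at0_affine _ _ _ _ (fun e => shock_C cv r v p pM (rho e) (M e) (m e) 0) slope).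
    + eapply filter_imp; [| exact Hnear]. intros e Heq He d Hd.
      destruct (Heq He) as [-> ->]. unfold shock_C, slope, Rdiv. ring.
    + apply ex_derive_continuous_R. unfold shock_C. auto_derive. repeat split; auto.
    + rewrite HM, Hm. exact (shock_C_at0 _ _ _ _ _ _ _ _ Hsh).
    + apply ex_derive_continuous_R. unfold slope. auto_derive. repeat split; auto.
  - apply (lim_at0_affine _ _ _ _ (fun e => shock_gamma cv r v p pM (rho e) (M e) (m e) 0)
      (fun e => / rho e * (rho e * (slope e / 2) - 1))).
    + eapply filter_imp; [| exact Hnear]. intros e Heq He d Hd.
      destruct (Heq He) as [-> ->]. unfold shock_gamma, shock_C, slope, Rdiv. ring.
    + apply ex_derive_continuous_R. unfold shock_gamma, shock_C. auto_derive. repeat split; auto.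
    + rewrite HM, Hm. exact (shock_gamma_at0 _ _ _ _ _ _ _ _ Hsh).
    + apply ex_derive_continuous_R. unfold slope. auto_derive. repeat split; auto.
Qed.

Lemma root_conj_form (a b disc c : R) :
  a <> 0 -> 0 <= disc -> 0 < b -> b ^ 2 - disc = a * c ->
  / a * (b - sqrt disc) = c / (b + sqrt disc).
Proof.
  intros Ha Hdisc Hb Hbc. pose proof (sqrt_pos disc).
  apply (Rmult_eq_reg_r (a * (b + sqrt disc))); [| apply Rmult_integral_contrapositive; split; lra].
  replace (/ a * (b - sqrt disc) * (a * (b + sqrt disc))) with (b ^ 2 - sqrt disc * sqrt disc)
    by (field; exact Ha).
  rewrite sqrt_sqrt by exact Hdisc. rewrite Hbc. field. lra.
Qed.

Lemma root_conj_form_value (a b c s : R) :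
  0 < b -> 0 < b - s * a -> c = s * (2 * b - s * a) -> c / (b + sqrt ((b - s * a) ^ 2)) = s.
Proof. intros Hb Hgap Hc. rewrite sqrt_pow2 by lra. rewrite Hc. field. lra. Qed.

(* mu0 = (lin0 - sqrt disc0) / A and mu1 = (Deps - sqrt disc1) / A, where lin0 ^ 2 - disc0 and
   Deps ^ 2 - disc1 are A * cst0 and A * cst1 (the factor A is cancelled by hand in cst0, cst1);
   mu0_rat and mu1_rat are the conjugate forms, which no longer divide by A. *)
Definition lin0 rl vl rr vr rMl rMr e :=
  Deps rl vl rr vr rMl rMr e + rl * rr * (rMr - e) * (vl - vr).
Definition disc0 rl vl pl rr vr pr rMl rMr e :=
  (rMl + e) ^ 2 * ((rMr - e - rr) / (rMl + e - rl)) * Beps rl vl pl rr vr pr rMl rMr e.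
Definition cst0 rl vl pl rr vr pr rMl rMr e :=
  vl ^ 2 * Aeps rl rr rMl rMr e + 2 * vl * rr * (rMl + e) * (rMr - e) * (vl - vr)
  - (rMl + e) ^ 2 / (rMl + e - rl)
    * (rr * (rMr - e) * (vl - vr) ^ 2 - (rMr - e - rr) * (pl - pr)).
Definition mu0_rat rl vl pl rr vr pr rMl rMr e :=
  cst0 rl vl pl rr vr pr rMl rMr e /
  (lin0 rl vl rr vr rMl rMr e + sqrt (disc0 rl vl pl rr vr pr rMl rMr e)).

Definition disc1 rl vl pl rr vr pr rMl rMr e :=
  (rMl + e - rl) * (rMr - e - rr) * Beps rl vl pl rr vr pr rMl rMr e.
Definition cst1 rl vl pl rr vr pr rMl rMr e :=
  vl ^ 2 * rl * (rMl + e) * (rMr - e - rr) - vr ^ 2 * rr * (rMr - e) * (rMl + e - rl)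
  + (rMl + e - rl) * (rMr - e - rr) * (pl - pr).
Definition mu1_rat rl vl pl rr vr pr rMl rMr e :=
  cst1 rl vl pl rr vr pr rMl rMr e /
  (Deps rl vl rr vr rMl rMr e + sqrt (disc1 rl vl pl rr vr pr rMl rMr e)).

Lemma lin0_sq_sub_disc0 rl vl pl rr vr pr rMl rMr e : rMl + e - rl <> 0 ->
  lin0 rl vl rr vr rMl rMr e ^ 2 - disc0 rl vl pl rr vr pr rMl rMr e
  = Aeps rl rr rMl rMr e * cst0 rl vl pl rr vr pr rMl rMr e.
Proof. intros Ha. unfold lin0, disc0, cst0, Beps, Deps, Aeps. field. exact Ha. Qed.

Lemma Deps_sq_sub_disc1 rl vl pl rr vr pr rMl rMr e :
  Deps rl vl rr vr rMl rMr e ^ 2 - disc1 rl vl pl rr vr pr rMl rMr e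
  = Aeps rl rr rMl rMr e * cst1 rl vl pl rr vr pr rMl rMr e.
Proof. unfold disc1, cst1, Beps, Deps, Aeps. ring. Qed.

Lemma ex_derive_mu0_rat rl vl pl rr vr pr rMl rMr :
  rMl - rl <> 0 -> 0 < disc0 rl vl pl rr vr pr rMl rMr 0 -> 0 < lin0 rl vl rr vr rMl rMr 0 ->
  ex_derive (mu0_rat rl vl pl rr vr pr rMl rMr) 0.
Proof.
  intros Ha Hdisc Hlin. pose proof (sqrt_pos (disc0 rl vl pl rr vr pr rMl rMr 0)).
  assert (ex_derive (lin0 rl vl rr vr rMl rMr) 0) by (unfold lin0, Deps; auto_derive; auto).
  assert (ex_derive (disc0 rl vl pl rr vr pr rMl rMr) 0).
  { unfold disc0, Beps, Aeps. auto_derive. rewrite Rplus_0_r. auto. }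
  assert (ex_derive (cst0 rl vl pl rr vr pr rMl rMr) 0).
  { unfold cst0, Aeps. auto_derive. rewrite Rplus_0_r. auto. }
  unfold mu0_rat. auto_derive. repeat split; auto. lra.
Qed.

Lemma ex_derive_mu1_rat rl vl pl rr vr pr rMl rMr :
  0 < disc1 rl vl pl rr vr pr rMl rMr 0 -> 0 < Deps rl vl rr vr rMl rMr 0 ->
  ex_derive (mu1_rat rl vl pl rr vr pr rMl rMr) 0.
Proof.
  intros Hdisc Hlin. pose proof (sqrt_pos (disc1 rl vl pl rr vr pr rMl rMr 0)).
  assert (ex_derive (Deps rl vl rr vr rMl rMr) 0) by (unfold Deps; auto_derive; auto).
  assert (ex_derive (disc1 rl vl pl rr vr pr rMl rMr) 0)
    by (unfold disc1, Beps, Aeps; auto_derive; auto).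
  assert (ex_derive (cst1 rl vl pl rr vr pr rMl rMr) 0) by (unfold cst1; auto_derive; auto).
  unfold mu1_rat. auto_derive. repeat split; auto. lra.
Qed.

Lemma mu0_eq_rat_near0 rl vl pl rr vr pr rMl rMr :
  0 < lin0 rl vl rr vr rMl rMr 0 ->
  locally 0 (fun e => Aeps rl rr rMl rMr e <> 0 -> 0 < rMl + e - rl -> 0 < rMr - e - rr ->
    0 <= Beps rl vl pl rr vr pr rMl rMr e ->
    mu0 rl vl pl rr vr pr rMl rMr e = mu0_rat rl vl pl rr vr pr rMl rMr e).
Proof.
  intros Hlin.
  assert (Hcont : continuous (lin0 rl vl rr vr rMl rMr) 0).
  { apply ex_derive_continuous_R. unfold lin0, Deps. auto_derive. auto. }
  eapply filter_imp; [| exact (locally_pos _ _ Hcont Hlin)].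
  intros e Hpos Ha Hal Har HB. simpl in Hpos.
  unfold mu0, mu0_rat. fold (lin0 rl vl rr vr rMl rMr e) (disc0 rl vl pl rr vr pr rMl rMr e).
  apply root_conj_form; auto.
  - unfold disc0. apply Rmult_le_pos; [apply Rmult_le_pos|]; auto.
    + apply pow2_ge_0.
    + apply Rlt_le, Rdiv_lt_0_compat; lra.
  - apply lin0_sq_sub_disc0. lra.
Qed.

Lemma mu1_eq_rat_near0 rl vl pl rr vr pr rMl rMr :
  0 < Deps rl vl rr vr rMl rMr 0 ->
  locally 0 (fun e => Aeps rl rr rMl rMr e <> 0 -> 0 < rMl + e - rl -> 0 < rMr - e - rr ->
    0 <= Beps rl vl pl rr vr pr rMl rMr e ->
    mu1 rl vl pl rr vr pr rMl rMr e = mu1_rat rl vl pl rr vr pr rMl rMr e).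
Proof.
  intros Hlin.
  assert (Hcont : continuous (Deps rl vl rr vr rMl rMr) 0).
  { apply ex_derive_continuous_R. unfold Deps. auto_derive. auto. }
  eapply filter_imp; [| exact (locally_pos _ _ Hcont Hlin)].
  intros e Hpos Ha Hal Har HB. simpl in Hpos.
  unfold mu1, mu1_rat. fold (disc1 rl vl pl rr vr pr rMl rMr e).
  apply root_conj_form; auto.
  - unfold disc1. apply Rmult_le_pos; [apply Rmult_le_pos|]; lra.
  - apply Deps_sq_sub_disc1.
Qed.

Local Set Implicit Arguments.
Record shocks_at_rest cv rl vl pl rr vr pr rMl rMr pM sm sp : Prop := {
  rl_pos : 0 < rl;
  rr_pos : 0 < rr;
  rl_lt_rMl : rl < rMl;
  rr_lt_rMr : rr < rMr;
  sm_neg : sm < 0;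
  sp_pos : 0 < sp;
  shock_l : RH cv sm rl vl pl rMl 0 pM;
  shock_r : RH cv sp rr vr pr rMr 0 pM }.

Lemma shocks_at_rest_reflect cv rl vl pl rr vr pr rMl rMr pM sm sp :
  shocks_at_rest cv rl vl pl rr vr pr rMl rMr pM sm sp ->
  shocks_at_rest cv rr (- vr) pr rl (- vl) pl rMr rMl pM (- sp) (- sm).
Proof.
  intros [Hrl Hrr HrMl HrMr Hsm Hsp Hl Hr].
  apply RH_reflect in Hl, Hr. rewrite Ropp_0 in Hl, Hr.
  constructor; auto; lra.
Qed.

Section AtZero.

Variables cv rl vl pl rr vr pr rMl rMr pM sm sp : R.
Hypothesis rest : shocks_at_rest cv rl vl pl rr vr pr rMl rMr pM sm sp.

Let Hrl := rl_pos rest.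
Let Hrr := rr_pos rest.
Let HrMl := rl_lt_rMl rest.
Let HrMr := rr_lt_rMr rest.
Let Hsm := sm_neg rest.
Let Hsp := sp_pos rest.

Let vl_eq := proj1 (RH_rest_solve _ _ _ _ _ _ _ Hrl (shock_l rest)).
Let pl_eq := proj2 (RH_rest_solve _ _ _ _ _ _ _ Hrl (shock_l rest)).
Let vr_eq := proj1 (RH_rest_solve _ _ _ _ _ _ _ Hrr (shock_r rest)).
Let pr_eq := proj2 (RH_rest_solve _ _ _ _ _ _ _ Hrr (shock_r rest)).

Let a := rMl - rl.
Let b := rMr - rr.
Let J := sp * rMr - sm * rMl.

Lemma J_pos : 0 < J.
Proof. unfold J. nra. Qed.

Lemma Deps_at0 : Deps rl vl rr vr rMl rMr 0 = a * b * J.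
Proof. unfold Deps, a, b, J. rewrite vl_eq, vr_eq. field. lra. Qed.

Lemma Deps_at0_pos : 0 < Deps rl vl rr vr rMl rMr 0.
Proof. rewrite Deps_at0. pose proof J_pos. unfold a, b. repeat apply Rmult_lt_0_compat; lra. Qed.

Lemma lin0_at0 :
  lin0 rl vl rr vr rMl rMr 0 = a * b * J + rMr * (sp * b * rl - sm * a * rr).
Proof. unfold lin0. rewrite Deps_at0. unfold a, b. rewrite vl_eq, vr_eq. field. lra. Qed.

Lemma lin0_gap_at0 : lin0 rl vl rr vr rMl rMr 0 - sm * Aeps rl rr rMl rMr 0 = b * rMl * J.
Proof. rewrite lin0_at0. unfold Aeps, a, b, J. ring. Qed.

Lemma lin0_gap_at0_pos : 0 < lin0 rl vl rr vr rMl rMr 0 - sm * Aeps rl rr rMl rMr 0.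
Proof.
  rewrite lin0_gap_at0. pose proof J_pos. unfold b. repeat apply Rmult_lt_0_compat; lra.
Qed.

Lemma lin0_at0_pos : 0 < lin0 rl vl rr vr rMl rMr 0.
Proof.
  rewrite lin0_at0. pose proof J_pos. unfold a, b.
  assert (0 < (rMl - rl) * (rMr - rr) * J) by (repeat apply Rmult_lt_0_compat; lra).
  assert (0 < sp * (rMr - rr) * rl) by (repeat apply Rmult_lt_0_compat; lra).
  assert (0 < - sm * (rMl - rl) * rr) by (repeat apply Rmult_lt_0_compat; lra).
  nra.
Qed.

Lemma disc0_at0 : disc0 rl vl pl rr vr pr rMl rMr 0
  = (lin0 rl vl rr vr rMl rMr 0 - sm * Aeps rl rr rMl rMr 0) ^ 2.
Proof.
  unfold disc0, lin0, Beps, Deps, Aeps. rewrite pl_eq, pr_eq, vl_eq, vr_eq. field. lra.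
Qed.

Lemma cst0_at0 : cst0 rl vl pl rr vr pr rMl rMr 0
  = sm * (2 * lin0 rl vl rr vr rMl rMr 0 - sm * Aeps rl rr rMl rMr 0).
Proof.
  unfold cst0, lin0, Deps, Aeps. rewrite pl_eq, pr_eq, vl_eq, vr_eq. field. lra.
Qed.

Lemma disc0_at0_pos : 0 < disc0 rl vl pl rr vr pr rMl rMr 0.
Proof. rewrite disc0_at0. apply pow_lt, lin0_gap_at0_pos. Qed.

Lemma mu0_rat_at0 : mu0_rat rl vl pl rr vr pr rMl rMr 0 = sm.
Proof.
  unfold mu0_rat. rewrite disc0_at0.
  exact (root_conj_form_value _ _ _ _ lin0_at0_pos lin0_gap_at0_pos cst0_at0).
Qed.

Lemma disc1_at0 : disc1 rl vl pl rr vr pr rMl rMr 0 = Deps rl vl rr vr rMl rMr 0 ^ 2.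
Proof.
  unfold disc1, Beps, Deps, Aeps. rewrite pl_eq, pr_eq, vl_eq, vr_eq. field. lra.
Qed.

Lemma cst1_at0 : cst1 rl vl pl rr vr pr rMl rMr 0 = 0.
Proof. unfold cst1. rewrite pl_eq, pr_eq, vl_eq, vr_eq. field. lra. Qed.

Lemma disc1_at0_pos : 0 < disc1 rl vl pl rr vr pr rMl rMr 0.
Proof. rewrite disc1_at0. apply pow_lt, Deps_at0_pos. Qed.

Lemma mu1_rat_at0 : mu1_rat rl vl pl rr vr pr rMl rMr 0 = 0.
Proof. unfold mu1_rat. rewrite cst1_at0. unfold Rdiv. ring. Qed.

End AtZero.

Lemma Aeps_reflect rl rr rMl rMr e :
  Aeps rr rl rMr rMl (- e) = - Aeps rl rr rMl rMr e.
Proof. unfold Aeps. ring. Qed.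

Lemma Beps_reflect rl vl pl rr vr pr rMl rMr e :
  Beps rr (- vr) pr rl (- vl) pl rMr rMl (- e) = Beps rl vl pl rr vr pr rMl rMr e.
Proof. unfold Beps. rewrite Aeps_reflect. ring. Qed.

Lemma mu2_reflect rl vl pl rr vr pr rMl rMr e :
  mu2 rl vl pl rr vr pr rMl rMr e = - mu0 rr (- vr) pr rl (- vl) pl rMr rMl (- e).
Proof.
  unfold mu0, mu2. rewrite Aeps_reflect, Beps_reflect, Rinv_opp.
  replace (rMr + - e) with (rMr - e) by ring.
  replace (rMl - - e - rl) with (rMl + e - rl) by ring.
  replace (Deps rr (- vr) rl (- vl) rMr rMl (- e)) with (Deps rl vl rr vr rMl rMr e)
    by (unfold Deps; ring).
  ring.
Qed.

Definition mu2_rat rl vl pl rr vr pr rMl rMr e :=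
  - mu0_rat rr (- vr) pr rl (- vl) pl rMr rMl (- e).

Lemma mu2_rat_at0 cv rl vl pl rr vr pr rMl rMr pM sm sp :
  shocks_at_rest cv rl vl pl rr vr pr rMl rMr pM sm sp ->
  mu2_rat rl vl pl rr vr pr rMl rMr 0 = sp.
Proof.
  intros rest. unfold mu2_rat. rewrite Ropp_0.
  rewrite (mu0_rat_at0 (shocks_at_rest_reflect rest)). ring.
Qed.

Lemma ex_derive_mu2_rat cv rl vl pl rr vr pr rMl rMr pM sm sp :
  shocks_at_rest cv rl vl pl rr vr pr rMl rMr pM sm sp ->
  ex_derive (mu2_rat rl vl pl rr vr pr rMl rMr) 0.
Proof.
  intros rest. pose proof (shocks_at_rest_reflect rest) as mirror.
  assert (ex_derive (mu0_rat rr (- vr) pr rl (- vl) pl rMr rMl) 0).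
  { apply ex_derive_mu0_rat.
    - pose proof (rl_lt_rMl mirror). lra.
    - exact (disc0_at0_pos mirror).
    - exact (lin0_at0_pos mirror). }
  unfold mu2_rat. auto_derive. rewrite Ropp_0. assumption.
Qed.

Lemma mu_eq_rat_near0 cv rl vl pl rr vr pr rMl rMr pM sm sp emax :
  shocks_at_rest cv rl vl pl rr vr pr rMl rMr pM sm sp ->
  eps_max_ok rl vl pl rr vr pr rMl rMr emax ->
  locally 0 (fun e => 0 < e <= emax ->
    mu0 rl vl pl rr vr pr rMl rMr e = mu0_rat rl vl pl rr vr pr rMl rMr e /\
    mu1 rl vl pl rr vr pr rMl rMr e = mu1_rat rl vl pl rr vr pr rMl rMr e /\
    mu2 rl vl pl rr vr pr rMl rMr e = mu2_rat rl vl pl rr vr pr rMl rMr e).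
Proof.
  intros rest [_ Hok]. pose proof (shocks_at_rest_reflect rest) as mirror.
  assert (H0 := mu0_eq_rat_near0 rl vl pl rr vr pr rMl rMr (lin0_at0_pos rest)).
  assert (H1 := mu1_eq_rat_near0 rl vl pl rr vr pr rMl rMr (Deps_at0_pos rest)).
  assert (H2 := locally0_opp _ (mu0_eq_rat_near0 rr (- vr) pr rl (- vl) pl rMr rMl
    (lin0_at0_pos mirror))).
  eapply filter_imp; [| exact (filter_and _ _ H0 (filter_and _ _ H1 H2))].
  intros e (E0 & E1 & E2) He. destruct (Hok e He) as (HA & HB & Hb & Ha & _).
  repeat split; [apply E0 | apply E1 | rewrite mu2_reflect; unfold mu2_rat; f_equal; apply E2];
    try lra.
  - rewrite Aeps_reflect. intro. apply HA. lra.
  - rewrite Beps_reflect. lra.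
Qed.

Lemma lim_at0_C_1_gamma1 cv rl vl pl rr vr pr rMl rMr pM sm sp emax :
  shocks_at_rest cv rl vl pl rr vr pr rMl rMr pM sm sp ->
  eps_max_ok rl vl pl rr vr pr rMl rMr emax ->
  lim_at0 emax pM (C_1 cv rl vl pl rr vr pr rMl rMr pM) 0 /\
  lim_at0 emax pM (gamma1 cv rl vl pl rr vr pr rMl rMr pM) 0.
Proof.
  intros rest Hemax. pose proof (rl_pos rest). pose proof (rl_lt_rMl rest).
  apply (lim_at0_shock cv sm rl vl pl rMl pM emax (fun e => rMl + e)
    (mu0_rat rl vl pl rr vr pr rMl rMr) (mu1_rat rl vl pl rr vr pr rMl rMr)).
  - exact (shock_l rest).
  - pose proof (sm_neg rest). lra.
  - auto_derive. auto.
  - lra.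
  - apply ex_derive_mu0_rat; [lra | exact (disc0_at0_pos rest)
      | exact (lin0_at0_pos rest)].
  - exact (mu0_rat_at0 rest).
  - apply ex_derive_mu1_rat; [exact (disc1_at0_pos rest)
      | exact (Deps_at0_pos rest)].
  - exact (mu1_rat_at0 rest).
  - eapply filter_imp; [| exact (mu_eq_rat_near0 rest Hemax)].
    intros e Heq He. destruct (Heq He) as (E0 & E1 & _). auto.
Qed.

Lemma lim_at0_C_2_gamma2 cv rl vl pl rr vr pr rMl rMr pM sm sp emax :
  shocks_at_rest cv rl vl pl rr vr pr rMl rMr pM sm sp ->
  eps_max_ok rl vl pl rr vr pr rMl rMr emax ->
  lim_at0 emax pM (C_2 cv rl vl pl rr vr pr rMl rMr pM) 0 /\
  lim_at0 emax pM (gamma2 cv rl vl pl rr vr pr rMl rMr pM) 0.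
Proof.
  intros rest Hemax. pose proof (rr_pos rest). pose proof (rr_lt_rMr rest).
  apply (lim_at0_shock cv sp rr vr pr rMr pM emax (fun e => rMr - e)
    (mu2_rat rl vl pl rr vr pr rMl rMr) (mu1_rat rl vl pl rr vr pr rMl rMr)).
  - exact (shock_r rest).
  - pose proof (sp_pos rest). lra.
  - auto_derive. auto.
  - lra.
  - exact (ex_derive_mu2_rat rest).
  - exact (mu2_rat_at0 rest).
  - apply ex_derive_mu1_rat; [exact (disc1_at0_pos rest)
      | exact (Deps_at0_pos rest)].
  - exact (mu1_rat_at0 rest).
  - eapply filter_imp; [| exact (mu_eq_rat_near0 rest Hemax)].
    intros e Heq He. destruct (Heq He) as (_ & E1 & E2). auto.
Qed.

Local Unset Implicit Arguments.

Theorem proposition5p3 (cv rl vl pl rr vr pr rMl rMr vM pM emax : R) :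
  cv > / 2 ->
  rl > 0 -> pl > 0 -> rr > 0 -> pr > 0 ->
  shock_contact_shock cv rl vl pl rr vr pr rMl rMr vM pM ->
  vM = 0 ->
  eps_max_ok rl vl pl rr vr pr rMl rMr emax ->
  lim_at0 emax pM (C_1 cv rl vl pl rr vr pr rMl rMr pM) (vM ^ 2) /\
  lim_at0 emax pM (C_2 cv rl vl pl rr vr pr rMl rMr pM) (vM ^ 2) /\
  lim_at0 emax pM (gamma1 cv rl vl pl rr vr pr rMl rMr pM) (- (vM ^ 2 / 2)) /\
  lim_at0 emax pM (gamma2 cv rl vl pl rr vr pr rMl rMr pM) (- (vM ^ 2 / 2)).
Proof.
  intros _ Hrl _ Hrr _ (sm & sp & Hsm & Hsp & RH1 & RH3 & HMl & HMr & _) -> Hemax.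
  assert (rest : shocks_at_rest cv rl vl pl rr vr pr rMl rMr pM sm sp).
  { constructor; auto using RH_sym. }
  replace (- (0 ^ 2 / 2)) with 0 by (unfold Rdiv; ring).
  replace (0 ^ 2) with 0 by ring.
  destruct (lim_at0_C_1_gamma1 rest Hemax).
  destruct (lim_at0_C_2_gamma2 rest Hemax).
  auto.
Qed.
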